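(* Let $f$ be a nonconstant harmonic function on $K$ with $f(p_0)=\alpha$, $f(p_1)=\beta$, $f(p_2)=\gamma$. Then the restrictions of $f$ to all three edges $[p_0,p_1]$, $[p_0,p_2]$, $[p_1,p_2]$ are simultaneously strictly monotone if and only if at least one of the equalities $2\alpha=\beta+\gamma$, $2\beta=\alpha+\gamma$, $2\gamma=\alpha+\beta$ holds.
   Context: Let $p_0,p_1,p_2$ be the vertices of a unit equilateral triangle in $\mathbb{R}^2$, $F_i(x)=(x+p_i)/2$, and $K$ the Sierpinski gasket (the attractor of $F_0,F_1,F_2$). Minimal triangles of the graph $G_m$ are the triangles with vertices $F_w(p_0),F_w(p_1),F_w(p_2)$ for words $w$ of length $m$. A continuous $f:K\to\mathbb{R}$ is harmonic if for every $m\ge0$ and every minimal triangle of $G_m$ with vertices $v_i,v_j,v_k$, the value at the midpoint $v_{ij}$ of $[v_i,v_j]$ is $\frac15(2f(v_i)+2f(v_j)+f(v_k))$; such $f$ is uniquely determined by its values at $p_0,p_1,p_2$. Each edge $[p_i,p_j]$ is a straight segment contained in $K$, and monotonicity of the restriction refers to a linear parametrization of the segment. *)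

From HB Require Import structures.
From mathcomp Require Import all_boot all_order all_algebra.
From mathcomp Require Import all_classical all_reals all_analysis.
Set Implicit Arguments. Unset Strict Implicit. Unset Printing Implicit Defensive.
Import Order.TTheory GRing.Theory Num.Theory.
Import numFieldNormedType.Exports.
Local Open Scope classical_set_scope.
Local Open Scope ring_scope.

Section SG.
Variable R : realType.

Definition pv (i : 'I_3) : R * R :=
  match val i with
  | 0%N => (0, 0)
  | 1%N => (1, 0)
  | _ => (1 / 2, Num.sqrt 3 / 2)
  end.

Definition Fmap (i : 'I_3) (x : R * R) : R * R :=
  ((x.1 + (pv i).1) / 2, (x.2 + (pv i).2) / 2).

Definition Fw (w : seq 'I_3) (x : R * R) : R * R := foldr Fmap x w.

Definition midpt (x y : R * R) : R * R := ((x.1 + y.1) / 2, (x.2 + y.2) / 2).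

(* V_* : all vertices of all graphs G_m *)
Definition Vstar : set (R * R) := [set x | exists w i, x = Fw w (pv i)].

(* the Sierpinski gasket: the attractor of F_0,F_1,F_2, i.e. the closure of V_* *)
Definition SG : set (R * R) := closure Vstar.

(* harmonic functions on K (f is only relevant on K) *)
Definition sg_harmonic (f : R * R -> R) : Prop :=
  {within SG, continuous f} /\
  forall (w : seq 'I_3) (i j k : 'I_3), i != j -> j != k -> i != k ->
    f (midpt (Fw w (pv i)) (Fw w (pv j))) =
      (2 * f (Fw w (pv i)) + 2 * f (Fw w (pv j)) + f (Fw w (pv k))) / 5.

Definition seg (i j : 'I_3) (t : R) : R * R :=
  ((pv i).1 + t * ((pv j).1 - (pv i).1), (pv i).2 + t * ((pv j).2 - (pv i).2)).

Definition strictly_monotone_on_edge (f : R * R -> R) (i j : 'I_3) : Prop :=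
  (forall s t, s \in `[0, 1] -> t \in `[0, 1] -> s < t -> f (seg i j s) < f (seg i j t)) \/
  (forall s t, s \in `[0, 1] -> t \in `[0, 1] -> s < t -> f (seg i j t) < f (seg i j s)).

Definition nonconstant_on (A : set (R * R)) (f : R * R -> R) : Prop :=
  exists x y, A x /\ A y /\ f x != f y.

End SG.

Definition i0 : 'I_3 := @Ordinal 3 0 isT.
Definition i1 : 'I_3 := @Ordinal 3 1 isT.
Definition i2 : 'I_3 := @Ordinal 3 2 isT.

From HB Require Import structures.
From mathcomp Require Import all_boot all_order all_algebra.
From mathcomp Require Import all_classical all_reals all_analysis.
From mathcomp Require Import ring lra.
Set Implicit Arguments.
Unset Strict Implicit.
Unset Printing Implicit Defensive.

Import Order.TTheory GRing.Theory Num.Theory.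
Import numFieldNormedType.Exports.
Local Open Scope ring_scope.

(* Fix an edge [p_i, p_j] with opposite vertex p_k. The values of a harmonic
   function at F_j^n p_i and F_j^n p_k obey a linear recursion whose dominant
   eigenvalue is 3/5, so if f increases towards p_j the dominant mode must have
   the right sign: f(p_i) + f(p_k) <= 2 f(p_j); symmetrically
   2 f(p_i) <= f(p_j) + f(p_k) near p_i. Conversely, these two inequalities pass
   from a triangle to its two subtriangles along the edge, so f increases along
   the dyadic points of the edge, and everywhere on it by continuity. Imposing
   this criterion on all three edges leaves only the configurations in which one
   vertex value is the mean of the other two. *)

(* [x], [y]: values at the ends of an edge; [z]: value at the opposite vertex. *)
Definition edge_admissible {R : numDomainType} (x y z : R) :=
  x < y /\ 2 * x <= y + z /\ x + z <= 2 * y.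

Lemma edge_admissible_triangle (R : realFieldType) (a b c : R) :
  ~ (a = b /\ a = c) ->
  ((edge_admissible a b c \/ edge_admissible b a c) /\
   (edge_admissible a c b \/ edge_admissible c a b) /\
   (edge_admissible b c a \/ edge_admissible c b a)) <->
  (2 * a = b + c \/ 2 * b = a + c \/ 2 * c = a + b).
Proof.
rewrite /edge_admissible => not_const; split; first lra.
by have [ab|ab|ab] := ltgtP a b; lra.
Qed.

Lemma ge0_of_geometric_lower_bound (R : archiRealFieldType) (S D : R) :
  (forall n, 0 < 3 ^+ n * S + D) -> 0 <= S.
Proof.
move=> pos; rewrite leNgt; apply/negP => S_lt0.
have nS_gt0 : 0 < - S by rewrite oppr_gt0.
pose n := (Num.truncn (`|D| / - S)).+1.
have n_gt : `|D| / - S < n%:R.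
  by have /andP[] := truncn_itv (divr_ge0 (normr_ge0 D) (ltW nS_gt0)).
have D_lt : `|D| < n%:R * - S by rewrite -ltr_pdivrMr.
have n_le : n%:R <= 3 ^+ n :> R by rewrite -natrX ler_nat ltnW // ltn_expl.
have := pos n; have := ler_norm D; nra.
Qed.

Section Dyadic.
Variable R : archiRealFieldType.

Definition dy (n m : nat) : R := m%:R / 2 ^+ n.
Definition dyadic (t : R) := exists n m, (m <= 2 ^ n)%N /\ t = dy n m.

Lemma dyadic_dense a b : 0 <= a -> a < b -> b <= 1 ->
  exists t, [/\ dyadic t, a < t & t <= b].
Proof.
move=> a_ge0 ab b_le1.
have ba_gt0 : 0 < b - a by lra.
pose n := (Num.truncn ((b - a)^-1)).+1.
have inv_gt0 : 0 < (b - a)^-1 by rewrite invr_gt0.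
have n_gt : (b - a)^-1 < n%:R by have /andP[] := truncn_itv (ltW inv_gt0).
have n_le : n%:R <= 2 ^+ n :> R by rewrite -natrX ler_nat ltnW // ltn_expl.
have pow_gt0 : 0 < 2 ^+ n :> R by rewrite exprn_gt0.
have gap : 1 < (b - a) * 2 ^+ n.
  have : (b - a)^-1 < 2 ^+ n by lra.
  have : (b - a) * (b - a)^-1 = 1 by rewrite mulfV // gt_eqF.
  nra.
have a2_ge0 : 0 <= a * 2 ^+ n by rewrite mulr_ge0 // ltW.
pose m := (Num.truncn (a * 2 ^+ n)).+1.
have /andP[m_le _] := truncn_itv a2_ge0.
have mE : m%:R = (Num.truncn (a * 2 ^+ n))%:R + 1 :> R by rewrite /m -addn1 natrD.
have m_gt : a * 2 ^+ n < m%:R by have /andP[] := truncn_itv a2_ge0.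
have m_lt : m%:R < b * 2 ^+ n by nra.
exists (dy n m); split.
- exists n, m; split => //; rewrite -(ler_nat R) natrX.
  by apply: ltW; apply: lt_le_trans m_lt _; nra.
- by rewrite /dy ltr_pdivlMr.
- by rewrite /dy ler_pdivrMr // ltW // -mE.
Qed.

Lemma dyadic_approx s r : 0 <= s -> s <= 1 -> 0 < r ->
  exists t, dyadic t /\ `|t - s| < r.
Proof.
move=> s_ge0 s_le1 r_gt0; have [s_lt1|s_ge1] := ltP s 1.
- have [||t [Dt st tb]] := @dyadic_dense s (Order.min 1 (s + r / 2)) s_ge0.
  + by rewrite lt_min s_lt1 /=; lra.
  + by rewrite ge_min lexx.
  exists t; split => //; move: tb; rewrite le_min => /andP[_ ?].
  by rewrite ger0_norm; lra.
- have -> : s = 1 by lra.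
  exists 1; rewrite subrr normr0; split => //.
  by exists 0%N, 1%N; rewrite /dy expr0 divr1.
Qed.

Lemma dy_double n m : dy n.+1 m.*2 = dy n m.
Proof. by rewrite /dy exprS -muln2 natrM; field; rewrite expf_neq0. Qed.

Lemma dy_double_mid n m : dy n.+1 m.*2.+1 = (dy n m + dy n m.+1) / 2.
Proof. by rewrite /dy exprS -muln2 !mulrS natrM; field; rewrite expf_neq0. Qed.

Lemma dy_scale n n' m : dy n m = dy (n + n') (m * 2 ^ n').
Proof. by rewrite /dy natrM natrX exprD; field; rewrite !expf_neq0. Qed.

Lemma dy_ltn n m m' : dy n m < dy n m' -> (m < m')%N.
Proof. by rewrite /dy ltr_pM2r ?invr_gt0 ?exprn_gt0 // ltr_nat. Qed.

End Dyadic.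

Section DenseMonotone.
Variables (R : realFieldType) (D : R -> Prop) (h : R -> R).
Hypothesis D_dense : forall a b, 0 <= a -> a < b -> b <= 1 ->
  exists t, [/\ D t, a < t & t <= b].
Hypothesis h_incr : forall s t, D s -> D t -> s < t -> h s < h t.
Hypothesis h_cont : forall s, 0 <= s -> s <= 1 -> forall e, 0 < e ->
  exists2 r, 0 < r & forall t, 0 <= t -> t <= 1 -> `|t - s| < r -> `|h t - h s| < e.

Lemma le_dense_right s e : 0 <= s -> s < e -> e <= 1 -> D e -> h s <= h e.
Proof.
move=> s_ge0 se e_le1 De; apply/ler_addgt0Pr => eps eps_gt0.
have [r r_gt0 near_s] := h_cont s_ge0 (ltW (lt_le_trans se e_le1)) eps_gt0.
have [||d [Dd sd]] := @D_dense s (Order.min ((s + e) / 2) (s + r / 2)) s_ge0.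
- by rewrite lt_min; apply/andP; split; lra.
- by rewrite ge_min; apply/orP; left; lra.
rewrite le_min => /andP[d_mid d_r].
have := h_incr Dd De ltac:(lra).
have := near_s d ltac:(lra) ltac:(lra) ltac:(rewrite ger0_norm; lra).
by rewrite ltr_norml; lra.
Qed.

Lemma le_dense_left e t : 0 <= e -> e < t -> t <= 1 -> D e -> h e <= h t.
Proof.
move=> e_ge0 et t_le1 De; apply/ler_addgt0Pr => eps eps_gt0.
have [r r_gt0 near_t] := h_cont (le_trans e_ge0 (ltW et)) t_le1 eps_gt0.
have [|||d [Dd dt td]] := @D_dense (Order.max e (t - r / 2)) t.
- by rewrite le_max e_ge0.
- by rewrite gt_max; apply/andP; split; lra.
- by [].
move: dt; rewrite gt_max => /andP[ed dr].
have := h_incr De Dd ed.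
have := near_t d ltac:(lra) ltac:(lra) ltac:(rewrite ler0_norm; lra).
by rewrite ltr_norml; lra.
Qed.

Lemma incr_of_dense s t : 0 <= s -> s < t -> t <= 1 -> h s < h t.
Proof.
move=> s_ge0 st t_le1.
have [||e1 [D1 se1 e1_le]] := @D_dense s ((s + t) / 2) s_ge0; try lra.
have [|||e2 [D2 e12 e2_le]] := @D_dense e1 ((e1 + t) / 2); try lra.
have := @le_dense_right s e1 s_ge0 se1 ltac:(lra) D1.
have := h_incr D1 D2 e12.
have := @le_dense_left e2 t ltac:(lra) ltac:(lra) t_le1 D2.
lra.
Qed.

End DenseMonotone.

Section Cells.
Variable R : realType.
Implicit Types (s t : R) (x y : R * R) (w : seq 'I_3) (i j k l : 'I_3).

Lemma Fw_rcons w l x : Fw (rcons w l) x = Fw w (Fmap l x).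
Proof. by rewrite /Fw foldr_rcons. Qed.

Lemma Fw_nseqS n l x : Fw (nseq n.+1 l) x = Fw (nseq n l) (Fmap l x).
Proof. by elim: n => //= n ->. Qed.

Lemma Fmap_midpt l x y : Fmap l (midpt x y) = midpt (Fmap l x) (Fmap l y).
Proof. by rewrite /Fmap /midpt /=; congr pair; field. Qed.

Lemma Fw_midpt w x y : Fw w (midpt x y) = midpt (Fw w x) (Fw w y).
Proof. by elim: w => //= l w ->; rewrite Fmap_midpt. Qed.

Lemma Fmap_pv_id i : Fmap i (pv R i) = pv R i.
Proof. by rewrite /Fmap; case: (pv R i) => a b /=; congr pair; field. Qed.

Lemma Fmap_pv i j : Fmap j (pv R i) = midpt (pv R i) (pv R j).
Proof. by []. Qed.

Lemma Fw_nseq_pv_id n i : Fw (nseq n i) (pv R i) = pv R i.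
Proof. by elim: n => //= n ->; rewrite Fmap_pv_id. Qed.

Lemma seg0 i j : @seg R i j 0 = pv R i.
Proof. by rewrite /seg; case: (pv R i) => a b /=; congr pair; ring. Qed.

Lemma seg1 i j : @seg R i j 1 = pv R j.
Proof. by rewrite /seg; case: (pv R i) (pv R j) => a b [c d] /=; congr pair; ring. Qed.

Lemma seg_sym i j t : seg j i t = seg i j (1 - t).
Proof. by rewrite /seg; case: (pv R i) (pv R j) => a b [c d] /=; congr pair; ring. Qed.

Lemma midpt_seg i j s t : midpt (seg i j s) (seg i j t) = seg i j ((s + t) / 2).
Proof. by rewrite /midpt /seg /=; congr pair; field. Qed.

Lemma Fw_nseq_seg n i j : Fw (nseq n j) (pv R i) = seg j i (2 ^+ n)^-1.
Proof.
elim: n => [|n IH]; first by rewrite expr0 invr1 seg1.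
rewrite Fw_nseqS Fmap_pv Fw_midpt IH Fw_nseq_pv_id -(seg0 j i) midpt_seg.
by congr seg; rewrite exprS; field; rewrite expf_neq0.
Qed.

Definition edge_word i j w := all (fun l => (l == i) || (l == j)) w.

Lemma dyadic_cell i j n m : (m < 2 ^ n)%N -> exists w, [/\ edge_word i j w,
  Fw w (pv R i) = seg i j (dy R n m) & Fw w (pv R j) = seg i j (dy R n m.+1)].
Proof.
elim: n m => [|n IH] m.
  rewrite expn0 ltnS leqn0 => /eqP ->; exists [::].
  by rewrite /dy expr0 !divr1 seg0 seg1.
move=> m_lt; have /IH[w [w_edge wi wj]] : (m./2 < 2 ^ n)%N.
  by rewrite ltn_half_double -mul2n -expnS.
rewrite -[m]odd_double_half; case: (odd m) => /=; rewrite ?add0n.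
- exists (rcons w j); split; first by rewrite /edge_word all_rcons eqxx orbT.
  + by rewrite Fw_rcons Fmap_pv Fw_midpt wi wj midpt_seg dy_double_mid.
  + by rewrite Fw_rcons Fmap_pv_id wj -doubleS dy_double.
- exists (rcons w i); split; first by rewrite /edge_word all_rcons eqxx.
  + by rewrite Fw_rcons Fmap_pv_id wi dy_double.
  + by rewrite Fw_rcons Fmap_pv Fw_midpt wi wj midpt_seg addrC dy_double_mid.
Qed.

Lemma dyadic_seg_Vstar i j t : dyadic t -> @Vstar R (seg i j t).
Proof.
move=> [n [m [m_le ->]]]; move: m_le; rewrite leq_eqVlt => /orP[/eqP ->|m_lt].
  by exists [::], j; rewrite /dy natrX divff ?expf_neq0 // seg1.
by have [w [_ wi _]] := dyadic_cell i j m_lt; exists w, i.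
Qed.

End Cells.

Definition edge_increasing {R : realType} (g : R * R -> R) (i j : 'I_3) :=
  forall s t, s \in `[0, 1] -> t \in `[0, 1] -> s < t -> g (seg i j s) < g (seg i j t).

Section Harmonic.
Variables (R : realType) (g : R * R -> R).
Hypothesis g_mean : forall w (a b c : 'I_3), a != b -> b != c -> a != c ->
  g (midpt (Fw w (pv R a)) (Fw w (pv R b))) =
  (2 * g (Fw w (pv R a)) + 2 * g (Fw w (pv R b)) + g (Fw w (pv R c))) / 5.

Lemma harmonic_Fmap w (a b c : 'I_3) : a != b -> b != c -> a != c ->
  g (Fw w (Fmap b (pv R a))) =
  (2 * g (Fw w (pv R a)) + 2 * g (Fw w (pv R b)) + g (Fw w (pv R c))) / 5.
Proof. by move=> ab bc ac; rewrite Fmap_pv Fw_midpt (g_mean w ab bc ac). Qed.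

Section Edge.
Variables i j k : 'I_3.
Hypotheses (ij : i != j) (jk : j != k) (ik : i != k).

Let x := g (pv R i).
Let y := g (pv R j).
Let z := g (pv R k).

(* Along F_j^n p_i and F_j^n p_k, the deviations from y evolve by
   [[2, 1], [1, 2]] / 5, with eigenvalues 3/5 and 1/5. *)
Lemma harmonic_nseq_values n :
  2 * 5 ^+ n * (g (Fw (nseq n j) (pv R i)) - y) = 3 ^+ n * (x + z - 2 * y) + (x - z) /\
  2 * 5 ^+ n * (g (Fw (nseq n j) (pv R k)) - y) = 3 ^+ n * (x + z - 2 * y) - (x - z).
Proof.
elim: n => [|n [IHi IHk]]; first by rewrite /x /y /z /= expr0; split; ring.
have ji : j != i by rewrite eq_sym.
have kj : k != j by rewrite eq_sym.
have ki : k != i by rewrite eq_sym.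
rewrite !Fw_nseqS (harmonic_Fmap _ ij jk ik) (harmonic_Fmap _ kj ji ki).
rewrite Fw_nseq_pv_id -/y.
have pow_neq0 : 2 * 5 ^+ n != 0 :> R by rewrite mulf_neq0 // expf_neq0.
have -> : g (Fw (nseq n j) (pv R i)) =
  y + (3 ^+ n * (x + z - 2 * y) + (x - z)) / (2 * 5 ^+ n) by rewrite -IHi; field.
have -> : g (Fw (nseq n j) (pv R k)) =
  y + (3 ^+ n * (x + z - 2 * y) - (x - z)) / (2 * 5 ^+ n) by rewrite -IHk; field.
by rewrite !exprS; split; field; rewrite expf_neq0.
Qed.

Lemma harmonic_endpoint_lt :
  (forall n, g (Fw (nseq n j) (pv R i)) < y) -> x + z <= 2 * y.
Proof.
move=> below; suff : 0 <= 2 * y - x - z by lra.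
apply: (@ge0_of_geometric_lower_bound _ _ (z - x)) => n.
have [values _] := harmonic_nseq_values n.
have := below n; have : 0 < 2 * 5 ^+ n :> R by rewrite mulr_gt0 // exprn_gt0.
nra.
Qed.

Lemma harmonic_endpoint_gt :
  (forall n, y < g (Fw (nseq n j) (pv R i))) -> 2 * y <= x + z.
Proof.
move=> above; suff : 0 <= x + z - 2 * y by lra.
apply: (@ge0_of_geometric_lower_bound _ _ (x - z)) => n.
have [values _] := harmonic_nseq_values n.
have := above n; have : 0 < 2 * 5 ^+ n :> R by rewrite mulr_gt0 // exprn_gt0.
nra.
Qed.

End Edge.

Lemma edge_increasing_admissible (i j k : 'I_3) : i != j -> j != k -> i != k ->
  edge_increasing g i j -> edge_admissible (g (pv R i)) (g (pv R j)) (g (pv R k)).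
Proof.
move=> ij jk ik incr.
have ji : j != i by rewrite eq_sym.
have in01 (t : R) : 0 <= t -> t <= 1 -> t \in `[0, 1] by rewrite in_itv /= => -> ->.
have inv_gt0 n : 0 < (2 ^+ n : R)^-1 by rewrite invr_gt0 exprn_gt0.
have inv_le1 n : (2 ^+ n : R)^-1 <= 1 by rewrite invf_le1 ?exprn_gt0 // exprn_ege1 ?ler1n.
split; [|split].
- by have := incr 0 1 (in01 _ (lexx 0) ler01) (in01 _ ler01 (lexx 1)) ltr01; rewrite seg0 seg1.
- apply: (@harmonic_endpoint_gt j i k ji ik jk) => n; rewrite Fw_nseq_seg -(seg0 R i j).
  by apply: incr; rewrite ?in01 //; have := inv_gt0 n; have := inv_le1 n; lra.
- apply: (@harmonic_endpoint_lt i j k ij jk ik) => n; rewrite Fw_nseq_seg seg_sym -(seg1 R i j).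
  by apply: incr; rewrite ?in01 //; have := inv_gt0 n; have := inv_le1 n; lra.
Qed.

Section Admissible.
Variables i j k : 'I_3.
Hypotheses (ij : i != j) (jk : j != k) (ik : i != k).
Hypothesis admissible : edge_admissible (g (pv R i)) (g (pv R j)) (g (pv R k)).

Lemma edge_admissible_Fw w : edge_word i j w ->
  edge_admissible (g (Fw w (pv R i))) (g (Fw w (pv R j))) (g (Fw w (pv R k))).
Proof.
have ji : j != i by rewrite eq_sym.
have kj : k != j by rewrite eq_sym.
have ki : k != i by rewrite eq_sym.
elim/last_ind: w => [//|w l IH].
rewrite /edge_word all_rcons => /andP[/orP[] /eqP -> w_edge]; have := IH w_edge;
  rewrite !Fw_rcons Fmap_pv_id /edge_admissible.
- by rewrite (harmonic_Fmap _ ji ik jk) (harmonic_Fmap _ ki ij kj); lra.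
- by rewrite (harmonic_Fmap _ ij jk ik) (harmonic_Fmap _ kj ji ki); lra.
Qed.

Lemma edge_admissible_grid_incr n m1 m2 : (m1 < m2)%N -> (m2 <= 2 ^ n)%N ->
  g (seg i j (dy R n m1)) < g (seg i j (dy R n m2)).
Proof.
have step m : (m < 2 ^ n)%N -> g (seg i j (dy R n m)) < g (seg i j (dy R n m.+1)).
  move=> m_lt; have [w [w_edge <- <-]] := dyadic_cell R i j m_lt.
  by have [] := edge_admissible_Fw w_edge.
elim: m2 => // m2 IH; rewrite ltnS leq_eqVlt => /orP[/eqP -> /step //|m12 m2_lt].
exact: lt_trans (IH m12 (ltnW m2_lt)) (step _ m2_lt).
Qed.

Lemma edge_admissible_dyadic_incr s t : dyadic s -> dyadic t -> s < t ->
  g (seg i j s) < g (seg i j t).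
Proof.
move=> [n1 [m1 [m1_le ->]]] [n2 [m2 [m2_le ->]]].
rewrite (dy_scale R n1 n2) (dy_scale R n2 n1 m2) addnC => /dy_ltn m12.
by apply: edge_admissible_grid_incr m12 _; rewrite expnD leq_mul.
Qed.

End Admissible.
End Harmonic.

Section Topology.
Local Open Scope classical_set_scope.
Variable R : realType.
Implicit Types (A : set (R * R)) (g : R * R -> R).

Lemma within_continuous_coord A g x : {within A, continuous g} -> A x ->
  forall e, 0 < e -> exists2 d, 0 < d & forall y, A y ->
    `|x.1 - y.1| < d -> `|x.2 - y.2| < d -> `|g x - g y| < e.
Proof.
move=> /subspace_continuousP g_cont Ax e e_gt0.
have /cvgrPdist_lt/(_ e e_gt0)/nbhs_ballP[d /= d_gt0 near_x] := g_cont x Ax.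
by exists d => // y Ay dy1 dy2; apply: near_x.
Qed.

Lemma closure_coord A x :
  (forall d, 0 < d -> exists y, A y /\ `|x.1 - y.1| < d /\ `|x.2 - y.2| < d) ->
  closure A x.
Proof.
move=> approx B /nbhs_ballP[d /= d_gt0 ball_B].
have [y [Ay [dy1 dy2]]] := approx d d_gt0.
by exists y; split => //; apply: ball_B; split; rewrite /= -ball_normE.
Qed.

Lemma closure_const A g a : {within closure A, continuous g} ->
  (forall x, A x -> g x = a) -> forall x, closure A x -> g x = a.
Proof.
move=> g_cont g_A x Ax; apply/eqP; apply/negPn/negP => g_neq.
have e_gt0 : 0 < `|g x - a| by rewrite normr_gt0 subr_eq0.
have [d d_gt0 near_x] := within_continuous_coord g_cont Ax e_gt0.
have : nbhs x [set y | `|x.1 - y.1| < d /\ `|x.2 - y.2| < d].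
  by apply/nbhs_ballP; exists d.
move=> /Ax[y [Ay [dy1 dy2]]].
by have := near_x y (subset_closure Ay) dy1 dy2; rewrite (g_A y Ay) ltxx.
Qed.

Lemma seg_coord_close (i j : 'I_3) d : 0 < d -> exists2 r, 0 < r & forall s t,
  `|s - t| < r -> `|(@seg R i j s).1 - (seg i j t).1| < d /\
                  `|(@seg R i j s).2 - (seg i j t).2| < d.
Proof.
move=> d_gt0; set u := (pv R j).1 - (pv R i).1; set v := (pv R j).2 - (pv R i).2.
have C_gt0 : 0 < 1 + `|u| + `|v| by have := normr_ge0 u; have := normr_ge0 v; lra.
exists (d / (1 + `|u| + `|v|)); first by rewrite divr_gt0.
move=> s t; rewrite ltr_pdivlMr // => st_close.
have -> : (seg i j s).1 - (seg i j t).1 = (s - t) * u by rewrite /seg /u /=; ring.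
have -> : (seg i j s).2 - (seg i j t).2 = (s - t) * v by rewrite /seg /v /=; ring.
have := normr_ge0 u; have := normr_ge0 v; have := normr_ge0 (s - t).
by rewrite !normrM; split; nra.
Qed.

Lemma seg_SG (i j : 'I_3) s : 0 <= s -> s <= 1 -> SG (@seg R i j s).
Proof.
move=> s_ge0 s_le1; apply: closure_coord => d d_gt0.
have [r r_gt0 close] := seg_coord_close i j d_gt0.
have [t [Dt ts]] := dyadic_approx s_ge0 s_le1 r_gt0.
by exists (seg i j t); split; [exact: dyadic_seg_Vstar | apply: close; rewrite distrC].
Qed.

End Topology.

Lemma exists_third_vertex (i l : 'I_3) : i != l -> exists k, (i != k) && (l != k).
Proof.
move: i l => [[|[|[|//]]] ?] [[|[|[|//]]] ?] //= _.
- by exists i2.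
- by exists i1.
- by exists i2.
- by exists i0.
- by exists i1.
- by exists i0.
Qed.

Lemma strictly_monotone_on_edgeE (R : realType) (g : R * R -> R) (i j : 'I_3) :
  strictly_monotone_on_edge g i j <-> edge_increasing g i j \/ edge_increasing g j i.
Proof.
have flip (t : R) : t \in `[0, 1] -> 1 - t \in `[0, 1].
  by rewrite !in_itv /= => /andP[? ?]; apply/andP; split; lra.
rewrite /strictly_monotone_on_edge /edge_increasing.
split=> -[incr|decr]; [by left | right | by left | right] => s t s01 t01 st.
- by rewrite !(seg_sym i j); apply: decr; rewrite ?flip //; lra.
- by rewrite !(seg_sym j i); apply: decr; rewrite ?flip //; lra.
Qed.

Section HarmonicEdges.
Variables (R : realType) (f : R * R -> R).
Hypothesis f_harm : sg_harmonic f.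

Lemma admissible_edge_increasing (i j k : 'I_3) : i != j -> j != k -> i != k ->
  edge_admissible (f (pv R i)) (f (pv R j)) (f (pv R k)) -> edge_increasing f i j.
Proof.
move=> ij jk ik admissible s t; rewrite !in_itv /= => /andP[s_ge0 _] /andP[_ t_le1] st.
apply: (@incr_of_dense R (@dyadic R) (fun t => f (seg i j t))) => //.
- exact: @dyadic_dense R.
- move=> u v Du Dv uv.
  have dyadic_incr := edge_admissible_dyadic_incr (proj2 f_harm) ij jk ik admissible.
  exact: dyadic_incr Du Dv uv.
move=> u u_ge0 u_le1 e e_gt0.
have [d d_gt0 near_u] :=
  within_continuous_coord (proj1 f_harm) (seg_SG (i := i) (j := j) u_ge0 u_le1) e_gt0.
have [r r_gt0 close] := seg_coord_close i j d_gt0.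
exists r => // v v_ge0 v_le1 vu; rewrite distrC.
have [close1 close2] := close u v ltac:(by rewrite distrC).
exact: near_u (seg_SG v_ge0 v_le1) close1 close2.
Qed.

Lemma sg_harmonic_const : f (pv R i0) = f (pv R i1) -> f (pv R i0) = f (pv R i2) ->
  forall x, SG x -> f x = f (pv R i0).
Proof.
move=> e01 e02; apply: closure_const (proj1 f_harm) _ => _ [w [l ->]].
elim/last_ind: w l => [|w l' IH] l.
  case: l => [[|[|[|//]]] ?]; [| rewrite e01 | rewrite e02];
    by congr (f (pv R _)); apply: val_inj.
rewrite Fw_rcons; have [<-|ll'] := eqVneq l l'; first by rewrite Fmap_pv_id IH.
have [k /andP[lk l'k]] := exists_third_vertex ll'.
by rewrite (harmonic_Fmap (proj2 f_harm) _ ll' l'k lk) !IH; field.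
Qed.

Lemma harmonic_edge_monotoneP (i j k : 'I_3) : i != j -> j != k -> i != k ->
  strictly_monotone_on_edge f i j <->
  edge_admissible (f (pv R i)) (f (pv R j)) (f (pv R k)) \/
  edge_admissible (f (pv R j)) (f (pv R i)) (f (pv R k)).
Proof.
move=> ij jk ik; have ji : j != i by rewrite eq_sym.
rewrite strictly_monotone_on_edgeE; split=> -[incr|incr].
- by left; have := edge_increasing_admissible (proj2 f_harm) ij jk ik incr.
- by right; have := edge_increasing_admissible (proj2 f_harm) ji ik jk incr.
- by left; apply: admissible_edge_increasing ij jk ik incr.
- by right; apply: admissible_edge_increasing ji ik jk incr.
Qed.

End HarmonicEdges.


Theorem theorem4 (R : realType) (f : R * R -> R) :
  sg_harmonic f -> nonconstant_on (@SG R) f ->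
  ((strictly_monotone_on_edge f i0 i1 /\ strictly_monotone_on_edge f i0 i2 /\
    strictly_monotone_on_edge f i1 i2) <->
   (2 * f (@pv R i0) = f (@pv R i1) + f (@pv R i2) \/
    2 * f (@pv R i1) = f (@pv R i0) + f (@pv R i2) \/
    2 * f (@pv R i2) = f (@pv R i0) + f (@pv R i1))).
Proof.
move=> f_harm [x [y [Sx [Sy fxy]]]].
have vertices_not_const : ~ (f (pv R i0) = f (pv R i1) /\ f (pv R i0) = f (pv R i2)).
  move=> [e01 e02]; move/eqP: fxy; apply.
  by rewrite (sg_harmonic_const f_harm e01 e02 Sx) (sg_harmonic_const f_harm e01 e02 Sy).
rewrite (harmonic_edge_monotoneP f_harm (i := i0) (j := i1) (k := i2)) //.
rewrite (harmonic_edge_monotoneP f_harm (i := i0) (j := i2) (k := i1)) //.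
rewrite (harmonic_edge_monotoneP f_harm (i := i1) (j := i2) (k := i0)) //.
exact: edge_admissible_triangle.
Qed.
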